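(* Let $G=(V,E,\omega)$ be an undirected graph on $n$ vertices with positive edge weights, and let $k\ge 1$ be an integer. Set $\nu=1/(2^k-1)$ and let $V=A_0\supseteq A_1\supseteq\dots\supseteq A_{k-1}\supseteq A_k=\emptyset$ be obtained by including, for each $0\le i<k-1$, every element of $A_i$ in $A_{i+1}$ independently with probability $p_i=n^{-2^i\nu}$. For $0\le i\le k-1$ and $u\in A_i\setminus A_{i+1}$, let $p(u)\in A_{i+1}$ be a vertex with $d_G(u,p(u))=d_G(u,A_{i+1})$ (undefined if $i=k-1$), and let the bunch be $$B(u)=\{v\in A_i : d_G(u,v)<d_G(u,A_{i+1})\}\cup\{p(u)\}$$ (with $d_G(u,\emptyset)=\infty$ and $\{p(u)\}=\emptyset$ when $i=k-1$). Let $H=\{(u,v): u\in V,\ v\in B(u)\}$, where the edge $(u,v)$ has weight $d_G(u,v)$. Fix any $0<\delta<1/(8k)$ and any $x,y\in V$. Then for every $0\le i\le k-1$ at least one of the following holds: (1) $d^{((3/\delta)^i)}_{G\cup H}(x,y)\le (1+8\delta i)\, d_G(x,y)$; (2) there exists $z\in A_{i+1}$ such that $d^{((3/\delta)^i)}_{G\cup H}(x,z)\le 2\, d_G(x,y)$.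
   Context: $d_G(u,v)$ is the shortest-path distance in $G$, and $d_G(u,S)=\min_{s\in S}d_G(u,s)$. For a weighted graph $F$ and $t>0$, $d^{(t)}_F(u,v)$ denotes the minimum length of a $u$–$v$ path in $F$ with at most $t$ edges (hops). $G\cup H$ is the graph on $V$ with edge set $E\cup H$ (with the given weights). *)

From HB Require Import structures.
From mathcomp Require Import all_boot all_order all_algebra.
From mathcomp Require Import all_classical all_reals ereal.
Set Implicit Arguments. Unset Strict Implicit. Unset Printing Implicit Defensive.
Import Order.TTheory GRing.Theory Num.Theory.
Local Open Scope classical_set_scope.
Local Open Scope ring_scope.
Local Open Scope ereal_scope.

Section Dist.
Variables (R : realType) (V : finType).

(* A weighted (multi)graph: F a b c means there is an edge a -> b of weight c. *)
Definition wgraph := V -> V -> \bar R -> Prop.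

(* A walk from a: list of steps (next vertex, weight of the edge used). *)
Fixpoint is_walk (F : wgraph) (a : V) (s : seq (V * \bar R)) : Prop :=
  match s with
  | [::] => True
  | (b, c) :: s' => F a b c /\ is_walk F b s'
  end.

Definition wlen (s : seq (V * \bar R)) : \bar R := \sum_(bc <- s) bc.2.
Definition wend (a : V) (s : seq (V * \bar R)) : V := last a (map fst s).

Definition dist (F : wgraph) (u v : V) : \bar R :=
  ereal_inf [set wlen s | s in [set s | is_walk F u s /\ wend u s = v]].

Definition hopdist (F : wgraph) (t : R) (u v : V) : \bar R :=
  ereal_inf [set wlen s | s in
    [set s | is_walk F u s /\ wend u s = v /\ ((size s)%:R <= t)%R]].

Definition distS (F : wgraph) (u : V) (S : {set V}) : \bar R :=
  ereal_inf [set dist F u s | s in [set s | s \in S]].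

Definition graphG (e : rel V) (w : V -> V -> R) : wgraph :=
  fun a b c => e a b /\ c = (w a b)%:E.

Definition bunch (G : wgraph) (A : nat -> {set V}) (k : nat) (p : V -> V)
  (i : nat) (u v : V) : Prop :=
  (v \in A i /\ dist G u v < distS G u (A i.+1)) \/ ((i.+1 < k)%N /\ v = p u).

Definition hopE (G : wgraph) (A : nat -> {set V}) (k : nat) (p : V -> V) : wgraph :=
  fun a b c => exists i, [/\ (i < k)%N, a \in A i :\: A i.+1,
                             bunch G A k p i a b & c = dist G a b].

Definition unionGH (G : wgraph) (A : nat -> {set V}) (k : nat) (p : V -> V) : wgraph :=
  fun a b c => G a b c \/ hopE G A k p a b c \/ hopE G A k p b a c.

End Dist.

(* Induct on i, with an arbitrary G-walk of length L from x to y in place of d_G(x, y).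
   Cut the walk into at most 2/delta + 1 pieces, each a single edge or of length at most
   delta L.  By induction each piece is either good (the claim at level i gives a G ∪ H
   walk along it with few hops and stretch 1 + 8 delta i) or has both ends within
   2 delta L of A_{i+1}.  If all pieces are good they are concatenated.  Otherwise let u
   start the first bad piece and u' end the last, near z and z' in A_{i+1}: either z is
   already in A_{i+2}, or d_G(z, z') <= 4 delta L + d_G(u, u'), so that z' is in the bunch
   of z or p(z) in A_{i+2} is at most as far.  Every case uses at most 3/delta times the
   hops of level i.  Finally, V being finite, walks of length close to d_G(x, y) and a
   point of A_{i+1} nearest to x in hop distance turn the claim for walks into the claim
   for distances. *)

From HB Require Import structures.
From mathcomp Require Import all_boot all_order all_algebra.
From mathcomp Require Import all_classical all_reals ereal.
From mathcomp Require Import lra.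
Import Order.TTheory GRing.Theory Num.Theory.
Set Implicit Arguments. Unset Strict Implicit. Unset Printing Implicit Defensive.
Local Open Scope classical_set_scope.
Local Open Scope ring_scope.

Section Walks.
Local Open Scope ereal_scope.
Variables (R : realType) (V : finType).
Implicit Types (F : wgraph R V) (s : seq (V * \bar R)).

Lemma is_walk_cat F a s1 s2 :
  is_walk F a (s1 ++ s2) <-> is_walk F a s1 /\ is_walk F (wend a s1) s2.
Proof.
elim: s1 a => [|[b c] s1 IH] a /=; first by split=> // -[].
by rewrite IH /wend /=; tauto.
Qed.

Lemma wend_cat a s1 s2 : wend a (s1 ++ s2) = wend (wend a s1) s2.
Proof. by rewrite /wend map_cat last_cat. Qed.

Lemma wlen_nil : wlen (R:=R) (V:=V) [::] = 0.
Proof. by rewrite /wlen big_nil. Qed.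

Lemma wlen_cons b c s : wlen ((b, c) :: s) = c + wlen s.
Proof. by rewrite /wlen big_cons. Qed.

Lemma wlen_cat s1 s2 : wlen (s1 ++ s2) = wlen s1 + wlen s2.
Proof. by rewrite /wlen big_cat. Qed.

Lemma sub_is_walk F F' a s : (forall a b c, F a b c -> F' a b c) ->
  is_walk F a s -> is_walk F' a s.
Proof. by move=> FF'; elim: s a => [|[b c] s IH] a //= [/FF' ? /IH]. Qed.

Fixpoint rev_walk (a : V) s : seq (V * \bar R) :=
  if s is (b, c) :: s' then rcons (rev_walk b s') (a, c) else [::].

Lemma wend_rev_walk a s : wend (wend a s) (rev_walk a s) = a.
Proof. by case: s => [|[b c] s] //=; rewrite /wend map_rcons last_rcons. Qed.

Lemma size_rev_walk a s : size (rev_walk a s) = size s.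
Proof. by elim: s a => [|[b c] s IH] a //=; rewrite size_rcons IH. Qed.

Lemma wlen_rev_walk a s : wlen (rev_walk a s) = wlen s.
Proof.
elim: s a => [|[b c] s IH] a //=.
by rewrite -cats1 wlen_cat IH !wlen_cons wlen_nil adde0 addeC.
Qed.

Lemma is_walk_rev_walk F a s : (forall a b c, F a b c -> F b a c) ->
  is_walk F a s -> is_walk F (wend a s) (rev_walk a s).
Proof.
move=> Fsym; elim: s a => [|[b c] s IH] a //= [Fab ws].
rewrite -cats1 is_walk_cat; split; first exact: IH.
by rewrite [wend _ _]wend_rev_walk /=; split; first exact: Fsym.
Qed.

End Walks.

Section Graph.
Local Open Scope ereal_scope.
Variables (R : realType) (V : finType) (e : rel V) (w : V -> V -> R).
Hypothesis esym : symmetric e.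
Hypothesis wsym : forall a b, e a b -> w a b = w b a.
Hypothesis wpos : forall a b, e a b -> (0 < w a b)%R.
Implicit Types (s : seq (V * \bar R)).
Local Notation G := (graphG e w).

Lemma graphG_sym a b c : G a b c -> G b a c.
Proof. by case=> eab ->; split; [rewrite esym | rewrite wsym]. Qed.

Definition rlen s : R := (\sum_(bc <- s) fine bc.2)%R.

Lemma rlen_nil : rlen [::] = 0%R.
Proof. by rewrite /rlen big_nil. Qed.

Lemma rlen_cons b c s : rlen ((b, c) :: s) = (fine c + rlen s)%R.
Proof. by rewrite /rlen big_cons. Qed.

Lemma rlen_cat s1 s2 : rlen (s1 ++ s2) = (rlen s1 + rlen s2)%R.
Proof. by rewrite /rlen big_cat. Qed.

Lemma rlen_rev_walk a s : rlen (rev_walk a s) = rlen s.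
Proof.
elim: s a => [|[b c] s IH] a //=.
by rewrite -cats1 rlen_cat IH !rlen_cons rlen_nil addr0 addrC.
Qed.

Lemma wlen_graphG a s : is_walk G a s -> wlen s = (rlen s)%:E.
Proof.
elim: s a => [|[b c] s IH] a /=; first by rewrite wlen_nil rlen_nil.
by case=> [[_ ->] /IH]; rewrite wlen_cons rlen_cons => ->.
Qed.

Lemma rlen_ge0 a s : is_walk G a s -> (0 <= rlen s)%R.
Proof.
elim: s a => [|[b c] s IH] a /=; first by rewrite rlen_nil.
case=> [[eab ->] /IH]; rewrite rlen_cons /=.
by apply: addr_ge0; apply/ltW/wpos.
Qed.

Lemma rlen_gt0 a s : is_walk G a s -> s != [::] -> (0 < rlen s)%R.
Proof.
case: s => [|[b c] s] //= [[eab ->] /rlen_ge0 s_ge0] _.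
by rewrite rlen_cons /= ltr_wpDr // wpos.
Qed.

Lemma dist_le_rlen a s : is_walk G a s -> dist G a (wend a s) <= (rlen s)%:E.
Proof. by move=> ws; rewrite -(wlen_graphG ws); apply: ereal_inf_lbound; exists s. Qed.

Lemma dist_ge0 a b : 0 <= dist G a b.
Proof.
apply: le_ereal_inf_tmp => _ [s [ws _] <-].
by rewrite (wlen_graphG ws) lee_fin (rlen_ge0 ws).
Qed.

Lemma dist_self a : dist G a a = 0.
Proof.
apply/eqP; rewrite eq_le dist_ge0 andbT.
have nil_walk : is_walk G a [::] by [].
by have := dist_le_rlen nil_walk; rewrite rlen_nil.
Qed.

Lemma dist_edge_le a b : e a b -> dist G a b <= (w a b)%:E.
Proof.
move=> eab; have ab : is_walk G a [:: (b, (w a b)%:E)] by [].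
by have := dist_le_rlen ab; rewrite rlen_cons rlen_nil addr0.
Qed.

Lemma dist_lt_walk a b x : dist G a b < x ->
  exists s, [/\ is_walk G a s, wend a s = b & (rlen s)%:E < x].
Proof.
move/ereal_inf_lt => [_ [s [ws sb] <-]] lt_s; exists s; split => //.
by rewrite -(wlen_graphG ws).
Qed.

Lemma dist_le_add a b c (r1 r2 : R) : dist G a b <= r1%:E -> dist G b c <= r2%:E ->
  dist G a c <= (r1 + r2)%:E.
Proof.
move=> ab bc; apply/lee_addgt0Pr => eps eps0.
have eps2 : (0 < eps / 2)%R by apply: divr_gt0.
have lt_half r : r%:E < (r + eps / 2)%:E by rewrite lte_fin ltrDl.
have [s1 [ws1 sb l1]] := dist_lt_walk (le_lt_trans ab (lt_half r1)).
have [s2 [ws2 <- l2]] := dist_lt_walk (le_lt_trans bc (lt_half r2)).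
subst b.
have ws12 : is_walk G a (s1 ++ s2) by apply/is_walk_cat.
have := dist_le_rlen ws12; rewrite wend_cat rlen_cat => /le_trans; apply.
rewrite -EFinD lee_fin.
by move: l1 l2; rewrite !lte_fin; lra.
Qed.

Lemma dist_triangle a b c : dist G a c <= dist G a b + dist G b c.
Proof.
case Eab: (dist G a b) (dist_ge0 a b) => [r1| |] // _; last first.
  by rewrite addye ?leey // gt_eqF // (lt_le_trans ltNy0 (dist_ge0 b c)).
case Ebc: (dist G b c) (dist_ge0 b c) => [r2| |] // _; last by rewrite addey ?leey.
by rewrite -EFinD; apply: (dist_le_add (b := b)); rewrite ?Eab ?Ebc.
Qed.

Lemma dist_sym a b : dist G a b = dist G b a.
Proof.
suff le_sym u v : dist G v u <= dist G u v by apply/eqP; rewrite eq_le !le_sym.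
apply: le_ereal_inf_tmp => _ [s [ws <-] <-].
have := dist_le_rlen (is_walk_rev_walk graphG_sym ws).
by rewrite wend_rev_walk rlen_rev_walk (wlen_graphG ws).
Qed.

End Graph.

Section HopWalks.
Local Open Scope ereal_scope.
Variables (R : realType) (V : finType) (e : rel V) (w : V -> V -> R).
Hypothesis esym : symmetric e.
Hypothesis wsym : forall a b, e a b -> w a b = w b a.
Hypothesis wpos : forall a b, e a b -> (0 < w a b)%R.
Variables (k : nat) (A : nat -> {set V}) (p : V -> V).
Implicit Types (s : seq (V * \bar R)).
Local Notation G := (graphG e w).
Local Notation GH := (unionGH G A k p).

Lemma unionGH_sym a b c : GH a b c -> GH b a c.
Proof.
case=> [/(graphG_sym esym wsym) ?|[?|?]]; [left | right; right | right; left] => //.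
Qed.

Lemma unionGH_weight a b c : GH a b c -> 0 <= c /\ dist G a b <= c.
Proof.
case=> [[eab ->]|[[i [_ _ _ ->]]|[i [_ _ _ ->]]]].
- by split; [rewrite lee_fin ltW ?wpos | exact: dist_edge_le].
- by split; first exact: dist_ge0.
- by rewrite (dist_sym esym wsym); split; first exact: dist_ge0.
Qed.

Lemma dist_le_wlen_unionGH a s : is_walk GH a s -> dist G a (wend a s) <= wlen s.
Proof.
elim: s a => [|[b c] s IH] a /=; first by rewrite wlen_nil dist_self.
case=> /unionGH_weight [_ dab] /IH dbs; rewrite wlen_cons.
exact: le_trans (dist_triangle wpos a b _) (leeD dab dbs).
Qed.

Definition hop_walk x y (n r : R) := exists s, [/\ is_walk GH x s, wend x s = y,
  ((size s)%:R <= n)%R & wlen s <= r%:E].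

Lemma hop_walk_dist x y n r : hop_walk x y n r -> dist G x y <= r%:E.
Proof. by case=> s [ws <- _]; apply: le_trans (dist_le_wlen_unionGH ws). Qed.

Lemma hopdist_le x y n r : hop_walk x y n r -> hopdist GH n x y <= r%:E.
Proof. by case=> s [ws xy sn sr]; apply: le_trans sr; apply: ereal_inf_lbound; exists s. Qed.

Lemma hop_walk_nil x n r : (0 <= n)%R -> (0 <= r)%R -> hop_walk x x n r.
Proof. by move=> n0 r0; exists [::]; split => //; rewrite wlen_nil lee_fin. Qed.

Lemma hop_walk_cat x y z n1 r1 n2 r2 : hop_walk x y n1 r1 -> hop_walk y z n2 r2 ->
  hop_walk x z (n1 + n2) (r1 + r2).
Proof.
case=> s1 [ws1 <- n1s r1s] [s2 [ws2 <- n2s r2s]]; exists (s1 ++ s2); split.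
- exact/is_walk_cat.
- by rewrite wend_cat.
- by rewrite size_cat natrD lerD.
- by rewrite wlen_cat EFinD leeD.
Qed.

Lemma hop_walk_le x y n r n' r' : hop_walk x y n r -> (n <= n')%R -> (r <= r')%R ->
  hop_walk x y n' r'.
Proof.
case=> s [ws xy sn sr] nn' rr'; exists s; split => //; first exact: le_trans nn'.
by apply: le_trans sr _; rewrite lee_fin.
Qed.

Lemma hop_walk_sym x y n r : hop_walk x y n r -> hop_walk y x n r.
Proof.
case=> s [ws <- sn sr]; exists (rev_walk x s); split.
- exact: is_walk_rev_walk unionGH_sym ws.
- by rewrite wend_rev_walk.
- by rewrite size_rev_walk.
- by rewrite wlen_rev_walk.
Qed.

Lemma hop_walk_edge a b c r : GH a b c -> c <= r%:E -> hop_walk a b 1 r.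
Proof. by move=> ab cr; exists [:: (b, c)]; split; rewrite // wlen_cons wlen_nil adde0. Qed.

Lemma hop_walk_graphG a s : is_walk G a s -> hop_walk a (wend a s) (size s)%:R (rlen s).
Proof.
move=> ws; exists s; split => //; last by rewrite (wlen_graphG ws).
by apply: sub_is_walk ws => ? ? ? ?; left.
Qed.

End HopWalks.

Section Bunch.
Local Open Scope ereal_scope.
Variables (R : realType) (V : finType) (e : rel V) (w : V -> V -> R).
Variables (k : nat) (A : nat -> {set V}) (p : V -> V).
Hypothesis Ak : A k = finset.set0.
Hypothesis p_nearest : forall (i : nat) (u : V), (i.+1 < k)%N -> u \in A i :\: A i.+1 ->
  p u \in A i.+1 /\ dist (graphG e w) u (p u) = distS (graphG e w) u (A i.+1).
Local Notation G := (graphG e w).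
Local Notation hop_walk := (hop_walk e w k A p).

Lemma distS_set0 u : distS G u finset.set0 = +oo.
Proof.
by apply/eqP; rewrite eq_le leey; apply: le_ereal_inf_tmp => d [v]; rewrite /= finset.in_set0.
Qed.

Lemma bunch_hop i z z' r : (i < k)%N -> z \in A i :\: A i.+1 -> z' \in A i ->
  dist G z z' <= r%:E ->
  hop_walk z z' 1 r \/ exists2 y, y \in A i.+1 & hop_walk z y 1 r.
Proof.
move=> ik zA z'A zz'r.
have [near|far] := ltP (dist G z z') (distS G z (A i.+1)).
  by left; apply: hop_walk_edge zz'r; right; left; exists i; split => //; left.
have ik' : (i.+1 < k)%N.
  rewrite ltn_neqAle ik andbT; apply/eqP => ik'; move: far.
  by rewrite ik' Ak distS_set0 leNgt (le_lt_trans zz'r (ltey _)).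
have [pA pz] := p_nearest ik' zA; right; exists (p z) => //.
apply: (hop_walk_edge (c := dist G z (p z))); first by right; left; exists i; split => //; right.
by rewrite pz (le_trans far).
Qed.

End Bunch.

Section Pieces.
Variables (R : realType) (V : finType) (e : rel V) (w : V -> V -> R).
Hypothesis wpos : forall a b, e a b -> 0 < w a b.
Local Notation G := (graphG e w).
Implicit Types (s q : seq (V * \bar R)) (ps : seq (seq (V * \bar R))).

(* Pieces are merged greedily from the end of the walk, so any two consecutive pieces
   together weigh more than [lam]. *)
Lemma walk_pieces a s (lam : R) : 0 <= lam -> is_walk G a s ->
  exists ps, [/\ flatten ps = s,
    all (fun q => (size q == 1)%N || (rlen q <= lam)) ps &
    ((size ps)%:R - 1) * lam <= 2 * rlen s].
Proof.
move=> lam_ge0 ws.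
suff [ps [fl ok count]] : exists ps, [/\ flatten ps = s,
    all (fun q => (size q == 1)%N || (rlen q <= lam)) ps &
    ((size ps)%:R - 1) * lam <= 2 * rlen s - rlen (head [::] ps)].
  exists ps; split => //; suff : 0 <= rlen (head [::] ps) by lra.
  case: ps fl {ok count} => [|q ps] /= fl; first by rewrite rlen_nil.
  by move: ws; rewrite -fl => /is_walk_cat[/(rlen_ge0 wpos)].
elim: s a ws => [|[b c] s IH] a /=.
  by move=> _; exists [::]; split; rewrite //= rlen_nil; lra.
case=> [[/wpos wab ->] ws]; have [ps [<- pieces_ok count]] := IH b ws.
case: ps pieces_ok count => [|q ps] /=.
  by exists [:: [:: (b, (w a b)%:E)]]; split; rewrite //= rlen_cons !rlen_nil /=; lra.
move=> /andP[q_ok ps_ok] count; rewrite rlen_cons rlen_cat /= in count *.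
have [merge|split] := lerP (w a b + rlen q) lam.
- exists (((b, (w a b)%:E) :: q) :: ps); split => //=.
    by rewrite ps_ok rlen_cons /= merge orbT.
  by rewrite rlen_cons /=; lra.
- exists ([:: (b, (w a b)%:E)] :: q :: ps); split => //=; first by rewrite q_ok ps_ok.
  rewrite rlen_cons rlen_nil /= -[(size ps).+2]addn2 -[(size ps).+1]addn1 !natrD in count *.
  lra.
Qed.

End Pieces.

Section Chains.
Variables (R : realType) (V : finType) (e : rel V) (w : V -> V -> R).
Variables (k : nat) (A : nat -> {set V}) (p : V -> V).
Local Notation G := (graphG e w).
Local Notation hop_walk := (hop_walk e w k A p).
Implicit Types (q : seq (V * \bar R)) (ps : seq (seq (V * \bar R))).

Fixpoint walk_chain (P : V -> seq (V * \bar R) -> Prop) a ps : Prop :=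
  if ps is q :: ps' then P a q /\ walk_chain P (wend a q) ps' else True.

Lemma walk_chain_of_all (P : V -> seq (V * \bar R) -> Prop) (Q : pred (seq (V * \bar R))) a ps :
  (forall b q, is_walk G b q -> Q q -> P b q) ->
  is_walk G a (flatten ps) -> all Q ps -> walk_chain P a ps.
Proof.
move=> QP; elim: ps a => [|q ps IH] a //= /is_walk_cat[wq wps] /andP[Qq Qps].
by split; [exact: QP | exact: IH].
Qed.

Variables (t c : R) (near : V -> Prop).

Definition good_piece a q := hop_walk a (wend a q) t (c * rlen q).

Definition good_run a ps :=
  hop_walk a (wend a (flatten ps)) ((size ps)%:R * t) (c * rlen (flatten ps)).

Lemma good_run_nil a : good_run a [::].
Proof. by apply: hop_walk_nil; rewrite /= ?rlen_nil ?mul0r ?mulr0. Qed.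

Lemma good_run_cons a q ps : good_piece a q -> good_run (wend a q) ps ->
  good_run a (q :: ps).
Proof.
move=> gq gps; rewrite /good_run /= wend_cat rlen_cat mulrDr -addn1 natrD mulrDl mul1r addrC.
exact: hop_walk_cat gq gps.
Qed.

(* [ps2] runs from the first to the last bad piece. *)
Lemma walk_chain_split a ps :
  walk_chain (fun b q => good_piece b q \/ near b /\ near (wend b q)) a ps ->
  good_run a ps \/ exists ps1 ps2 ps3, [/\ ps = ps1 ++ ps2 ++ ps3, good_run a ps1,
    near (wend a (flatten ps1)), near (wend a (flatten (ps1 ++ ps2)))
    & good_run (wend a (flatten (ps1 ++ ps2))) ps3].
Proof.
elim: ps a => [|q ps IH] a /=; first by left; apply: good_run_nil.
case=> [[good_q|[near_a near_q]] /IH[good_ps|[ps1 [ps2 [ps3 [-> g1 n1 n2 g3]]]]]].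
- by left; apply: good_run_cons.
- right; exists (q :: ps1), ps2, ps3; rewrite /= !wend_cat; split => //.
  exact: good_run_cons.
- right; exists [::], [:: q], ps; rewrite /= !cats0; split => //; exact: good_run_nil.
- right; exists [::], (q :: ps1 ++ ps2), ps3; rewrite /= !flatten_cat !wend_cat catA.
  rewrite flatten_cat wend_cat in n2 g3; split => //; exact: good_run_nil.
Qed.

End Chains.

Section ErealLimits.
Local Open Scope ereal_scope.
Variable R : realType.
Implicit Types (a : \bar R) (c d r : R).

Lemma exists_gt_pmul_lt a c d : (0 < c)%R -> (c * d)%:E < a ->
  exists2 r, (d < r)%R & (c * r)%:E < a.
Proof.
move=> c_gt0; case: a => [a| |]; last by rewrite ltNge leNye.
  have ac : (c * (a / c))%R = a by rewrite mulrC divfK ?gt_eqF.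
  rewrite lte_fin -{1}ac ltr_pM2l // => da.
  exists ((d + a / c) / 2)%R; first lra.
  by rewrite lte_fin -{2}ac ltr_pM2l //; lra.
by move=> _; exists (d + 1)%R; [lra | exact: ltey].
Qed.

Lemma le_pmul_of_forall_gt a c d d' : (0 < c)%R -> (d < d')%R ->
  (forall r, (d < r)%R -> (r < d')%R -> a <= (c * r)%:E) -> a <= (c * d)%:E.
Proof.
move=> c_gt0 dd' near_d; rewrite leNgt; apply/negP => /(exists_gt_pmul_lt c_gt0)[r dr ra].
have r'd : (d < Num.min r ((d + d') / 2))%R by rewrite lt_min dr /=; lra.
have r'd' : (Num.min r ((d + d') / 2) < d')%R by rewrite gt_min; apply/orP; right; lra.
have r'r : (c * Num.min r ((d + d') / 2))%:E <= (c * r)%:E.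
  by rewrite lee_fin ler_pM2l // ge_min lexx.
by have := le_lt_trans (near_d _ r'd r'd') (le_lt_trans r'r ra); rewrite ltxx.
Qed.

Lemma le_pmul_or_exists_le (V : finType) (S : {set V}) (f : V -> \bar R) a c1 c2 d :
  (0 < c1)%R -> (0 < c2)%R ->
  (forall r, (d < r)%R -> a <= (c1 * r)%:E \/ exists2 z, z \in S & f z <= (c2 * r)%:E) ->
  a <= (c1 * d)%:E \/ exists2 z, z \in S & f z <= (c2 * d)%:E.
Proof.
move=> c1_gt0 c2_gt0 near_d.
have [S0|[z0 z0S]] := set_0Vmem S.
  left; apply: (le_pmul_of_forall_gt (d' := d + 1)) => // [|r dr _]; first lra.
  by case: (near_d r dr) => // -[z]; rewrite S0 finset.in_set0.
case: (arg_minP f (P := fun z => z \in S) z0S) => zm zmS zm_min.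
have [fzm|fzm] := leP (f zm) (c2 * d)%:E; first by right; exists zm.
have [r2 dr2 r2_fzm] := exists_gt_pmul_lt c2_gt0 fzm.
left; apply: (le_pmul_of_forall_gt c1_gt0 dr2) => r dr rr2.
case: (near_d r dr) => // -[z zS fz].
have c2r : (c2 * r)%:E < (c2 * r2)%:E by rewrite lte_fin ltr_pM2l.
have := le_lt_trans (zm_min z zS) (le_lt_trans fz (lt_trans c2r r2_fzm)).
by rewrite ltxx.
Qed.

End ErealLimits.

Section Levels.
Variables (R : realType) (V : finType) (e : rel V) (w : V -> V -> R).
Hypothesis esym : symmetric e.
Hypothesis wsym : forall a b, e a b -> w a b = w b a.
Hypothesis wpos : forall a b, e a b -> 0 < w a b.
Variables (k : nat) (A : nat -> {set V}) (p : V -> V) (delta : R).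
Hypothesis k_ge1 : (1 <= k)%N.
Hypothesis A0 : A 0%N = [set: V]%SET.
Hypothesis Ak : A k = finset.set0.
Hypothesis p_nearest : forall (i : nat) (u : V), (i.+1 < k)%N -> u \in A i :\: A i.+1 ->
  p u \in A i.+1 /\ dist (graphG e w) u (p u) = distS (graphG e w) u (A i.+1).
Hypothesis delta_gt0 : 0 < delta.
Hypothesis delta_lt : delta < 1 / (8 * k%:R).
Local Notation G := (graphG e w).
Local Notation hop_walk := (hop_walk e w k A p).
Local Notation good_piece := (good_piece e w k A p).

Definition hops i := (3 / delta) ^+ i.
Definition stretch i := 1 + 8 * delta * i%:R.

Definition near_next i lam u := exists2 z, z \in A i.+1 & hop_walk u z (hops i) (2 * lam).

Definition level_claim i x y L := hop_walk x y (hops i) (stretch i * L) \/ near_next i L x.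

Definition level_holds i :=
  forall x s, is_walk G x s -> level_claim i x (wend x s) (rlen s).

Lemma delta_k_lt1 : delta * (8 * k%:R) < 1.
Proof. by rewrite -ltr_pdivlMr // mulr_gt0 // ltr0n. Qed.

Lemma delta_le_eighth : 8 * delta <= 1.
Proof.
have k_ge1R : 1 <= k%:R :> R by rewrite ler1n.
by have := delta_k_lt1; nra.
Qed.

Lemma stretch_ge1 i : 1 <= stretch i.
Proof. by rewrite /stretch lerDl !mulr_ge0 // ltW. Qed.

Lemma stretchS i : stretch i.+1 = stretch i + 8 * delta.
Proof. by rewrite /stretch -addn1 natrD; lra. Qed.

Lemma stretch_add_le2 i : (i.+2 <= k)%N -> stretch i + 6 * delta <= 2.
Proof.
move=> ik; have := delta_k_lt1.
have : delta * (i%:R + 2) <= delta * k%:R by rewrite ler_pM2l // -[2]/(2%:R) -natrD ler_nat addn2.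
rewrite /stretch => i2_le k_lt; have := delta_gt0; lra.
Qed.

Lemma hops_ge1 i : 1 <= hops i.
Proof. by apply: exprn_ege1; rewrite ler_pdivlMr // mul1r; have := delta_le_eighth; lra. Qed.

Lemma hops_ge0 i : 0 <= hops i.
Proof. exact: le_trans ler01 (hops_ge1 i). Qed.

Lemma hopsS i : hops i.+1 = 3 / delta * hops i.
Proof. exact: exprS. Qed.

Lemma pieces_hops (J : nat) : (J%:R - 1) * delta <= 2 -> (J + 3)%:R <= 3 / delta.
Proof. by rewrite ler_pdivlMr // natrD => J_le; have := delta_le_eighth; lra. Qed.

Lemma level0 : level_holds 0.
Proof.
move=> x s ws; have L_ge0 := rlen_ge0 wpos ws.
rewrite /level_claim /near_next /hops /stretch expr0 mulr0 addr0 mul1r.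
have [xA1|xA1] := boolP (x \in A 1).
  by right; exists x => //; apply: hop_walk_nil; lra.
have xA : x \in A 0 :\: A 1 by rewrite finset.in_setD xA1 A0 finset.in_setT.
have yA : wend x s \in A 0 by rewrite A0 finset.in_setT.
case: (bunch_hop Ak p_nearest k_ge1 xA yA (dist_le_rlen ws)) => [|[z zA xz]]; first by left.
by right; exists z => //; apply: hop_walk_le xz _ _ => //; lra.
Qed.

Lemma piece_good_or_bad i lam : level_holds i ->
  forall b q, is_walk G b q -> (size q == 1)%N || (rlen q <= lam) ->
  good_piece (hops i) (stretch i) b q \/
  near_next i lam b /\ near_next i lam (wend b q).
Proof.
move=> IH b q wq /orP[/eqP q1|short].
  left; apply: hop_walk_le (hop_walk_graphG k A p wq) _ _; first by rewrite q1 hops_ge1.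
  by rewrite ler_peMl ?stretch_ge1 // (rlen_ge0 wpos wq).
have [good|[z zA bz]] := IH b q wq; first by left.
have := IH _ _ (is_walk_rev_walk (graphG_sym esym wsym) wq).
rewrite wend_rev_walk rlen_rev_walk => -[good'|[z' z'A qz']].
  by left; apply: hop_walk_sym.
have two_le : 2 * rlen q <= 2 * lam by rewrite ler_pM2l.
right; split; [exists z | exists z'] => //.
- exact: hop_walk_le bz (lexx _) two_le.
- exact: hop_walk_le qz' (lexx _) two_le.
Qed.

Lemma level_step_good_run i (J : nat) x y L : (J%:R - 1) * delta <= 2 -> 0 <= L ->
  hop_walk x y (J%:R * hops i) (stretch i * L) -> level_claim i.+1 x y L.
Proof.
move=> J_le L_ge0 xy; left; apply: hop_walk_le xy _ _.
  rewrite hopsS ler_wpM2r ?hops_ge0 //.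
  by apply: le_trans (pieces_hops J_le); rewrite ler_nat leq_addr.
by rewrite ler_wpM2r // stretchS lerDl mulr_ge0 // ltW.
Qed.

(* The stretch from [u] to [u'] is bypassed through [z] and [z']: either [z'] lies in the
   bunch of [z], giving one edge of [H], or the pivot [p z] in [A i.+2] is no farther. *)
Lemma level_step_detour i (x u u' y : V) (n1 n3 : nat) (l1 l2 l3 : R) :
  (i.+1 < k)%N -> (n1 + n3 + 3)%:R <= 3 / delta ->
  0 <= l1 -> 0 <= l2 -> 0 <= l3 ->
  hop_walk x u (n1%:R * hops i) (stretch i * l1) ->
  near_next i (delta * (l1 + l2 + l3)) u -> (dist G u u' <= l2%:E)%E ->
  near_next i (delta * (l1 + l2 + l3)) u' ->
  hop_walk u' y (n3%:R * hops i) (stretch i * l3) ->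
  level_claim i.+1 x y (l1 + l2 + l3).
Proof.
move=> ik n_le l1_ge0 l2_ge0 l3_ge0 xu [z zA uz] uu' [z' z'A u'z'] u'y.
rewrite /level_claim /near_next hopsS stretchS.
have d0 := delta_gt0; have t_ge1 := hops_ge1 i; have c_ge1 := stretch_ge1 i.
have c_le := stretch_add_le2 ik.
have t_ge0 := hops_ge0 i; have c_ge0 := le_trans ler01 c_ge1.
have hops_le : (n1%:R + n3%:R + 3) * hops i <= 3 / delta * hops i.
  by rewrite ler_wpM2r // -!natrD.
have n1t : 0 <= n1%:R * hops i by rewrite mulr_ge0.
have n3t : 0 <= n3%:R * hops i by rewrite mulr_ge0.
have cl1 : 0 <= stretch i * l1 by rewrite mulr_ge0.
have cl2 : l2 <= stretch i * l2 by rewrite ler_peMl.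
have cl3 : 0 <= stretch i * l3 by rewrite mulr_ge0.
have cL : (stretch i + 6 * delta) * (l1 + l2 + l3) <= 2 * (l1 + l2 + l3).
  by rewrite ler_wpM2r // !addr_ge0.
have dl1 : 0 <= delta * l1 by rewrite mulr_ge0 // ltW.
have dl2 : 0 <= delta * l2 by rewrite mulr_ge0 // ltW.
have dl3 : 0 <= delta * l3 by rewrite mulr_ge0 // ltW.
have [zA2|zA2] := boolP (z \in A i.+2).
  right; exists z => //; apply: hop_walk_le (hop_walk_cat xu uz) _ _; lra.
have zz' : (dist G z z' <=
    (2 * (delta * (l1 + l2 + l3)) + l2 + 2 * (delta * (l1 + l2 + l3)))%:E)%E.
  apply: dist_le_add (hop_walk_dist esym wsym wpos u'z').
  exact: dist_le_add (hop_walk_dist esym wsym wpos (hop_walk_sym esym wsym uz)) uu'.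
have zD : z \in A i.+1 :\: A i.+2 by rewrite finset.in_setD zA2 zA.
case: (bunch_hop Ak p_nearest ik zD z'A zz') => [zz'_hop|[y' y'A zy']].
  left; apply: hop_walk_le (hop_walk_cat (hop_walk_cat (hop_walk_cat (hop_walk_cat xu uz)
    zz'_hop) (hop_walk_sym esym wsym u'z')) u'y) _ _; lra.
right; exists y' => //.
by apply: hop_walk_le (hop_walk_cat (hop_walk_cat xu uz) zy') _ _; lra.
Qed.

Lemma level_step i : (i.+1 < k)%N -> level_holds i -> level_holds i.+1.
Proof.
move=> ik IH x s ws.
have [->|s_nonnil] := eqVneq s [::].
  by left; rewrite rlen_nil mulr0; apply: hop_walk_nil; rewrite ?hops_ge0.
have L_gt0 := rlen_gt0 wpos ws s_nonnil.
have lam_ge0 : 0 <= delta * rlen s by rewrite mulr_ge0 // ltW.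
have [ps [flat_ps pieces_ok count]] := walk_pieces wpos lam_ge0 ws.
have J_le : ((size ps)%:R - 1) * delta <= 2 by rewrite -(ler_pM2r L_gt0) -mulrA.
have hops_J := pieces_hops J_le.
rewrite -flat_ps in ws.
have := walk_chain_of_all (piece_good_or_bad (lam := delta * rlen s) IH) ws pieces_ok.
case/walk_chain_split => [good|[ps1 [ps2 [ps3 [ps_eq good1 near1 near2 good3]]]]].
  by rewrite -flat_ps; apply: level_step_good_run J_le (rlen_ge0 wpos ws) good.
subst s ps; rewrite !flatten_cat !rlen_cat !wend_cat addrA in near1 near2 good3 *.
move: ws; rewrite !flatten_cat => /is_walk_cat[ws1 /is_walk_cat[ws2 ws3]].
apply: (level_step_detour ik _ (rlen_ge0 wpos ws1) (rlen_ge0 wpos ws2) (rlen_ge0 wpos ws3)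
  good1 near1 (dist_le_rlen ws2) near2 good3).
by apply: le_trans hops_J; rewrite ler_nat !size_cat leq_add2r leq_add2l leq_addl.
Qed.

Lemma level_all i : (i < k)%N -> level_holds i.
Proof.
elim: i => [|i IH] ik; first exact: level0.
exact: level_step ik (IH (ltnW ik)).
Qed.

End Levels.

Theorem mainTheorem1 (R : realType) (V : finType) (e : rel V) (w : V -> V -> R)
  (k : nat) (A : nat -> {set V}) (p : V -> V) (delta : R) (x y : V) :
  symmetric e ->
  (forall a b, e a b -> w a b = w b a) ->
  (forall a b, e a b -> 0 < w a b) ->
  (1 <= k)%N ->
  A 0%N = [set: V]%SET ->
  (forall i, (i < k)%N -> A i.+1 \subset A i) ->
  A k = finset.set0 ->
  (forall (i : nat) (u : V), (i.+1 < k)%N -> u \in A i :\: A i.+1 ->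
     p u \in A i.+1 /\ dist (graphG e w) u (p u) = distS (graphG e w) u (A i.+1)) ->
  0 < delta -> delta < 1 / (8 * k%:R) ->
  forall i : nat, (i < k)%N ->
    (hopdist (unionGH (graphG e w) A k p) ((3 / delta) ^+ i) x y
       <= ((1 + 8 * delta * i%:R)%:E * dist (graphG e w) x y)%E)%E
    \/ (exists z, z \in A i.+1 /\
        (hopdist (unionGH (graphG e w) A k p) ((3 / delta) ^+ i) x z
           <= (2%:E * dist (graphG e w) x y)%E)%E).
Proof.
move=> esym wsym wpos k_ge1 A0 _ Ak p_nearest delta_gt0 delta_lt i ik.
have walks := level_all esym wsym wpos k_ge1 A0 Ak p_nearest delta_gt0 delta_lt ik.
have stretch_gt0 := lt_le_trans ltr01 (stretch_ge1 delta_gt0 i).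
case Exy: (dist (graphG e w) x y) (dist_ge0 wpos x y) => [d| |] // _; last first.
  by left; rewrite gt0_muley ?leey ?lte_fin.
suff [xy|[z zA xz]] : (hopdist (unionGH (graphG e w) A k p) (hops delta i) x y
      <= (stretch delta i * d)%:E)%E \/
    exists2 z, z \in A i.+1 &
      (hopdist (unionGH (graphG e w) A k p) (hops delta i) x z <= (2 * d)%:E)%E.
- by left; rewrite -EFinM.
- by right; exists z; rewrite -EFinM.
apply: le_pmul_or_exists_le => // r dr.
have d_lt : (dist (graphG e w) x y < r%:E)%E by rewrite Exy lte_fin.
have [s [ws <- s_lt]] := dist_lt_walk d_lt.
rewrite lte_fin in s_lt.
case: (walks x s ws) => [xy|[z zA xz]]; [left | right; exists z => //].
- by apply: le_trans (hopdist_le xy) _; rewrite lee_fin ler_pM2l // ltW.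
- by apply: le_trans (hopdist_le xz) _; rewrite lee_fin ler_pM2l // ltW.
Qed.
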